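(* Let $P\in\mathbb{R}_+^{n\times n}$ be sub-stochastic and $w\in\mathbb{R}^n_+$. For $c\in\mathbb{R}^n$ let $\underline x(c)$ and $\overline x(c)$ be the minimal and maximal solutions (entrywise order) of $x=S_0^w(P'x+c)$. Let $\mathcal T\cup\mathcal S_1\cup\dots\cup\mathcal S_m$ be the partition of $\{1,\dots,n\}$ into the transient part and the irreducible trapping sets of $\mathcal G_P$, and for each $l$ let $\pi^{(l)}$ be the invariant probability vector of the block $P_{\mathcal S_l\mathcal S_l}$ (i.e. $\pi^{(l)}\ge0$, $\mathbbm{1}'\pi^{(l)}=1$, $(P_{\mathcal S_l\mathcal S_l})'\pi^{(l)}=\pi^{(l)}$). Then for $p\ge1$, $$\max_{c\in\mathbb{R}^n}\|\overline x(c)-\underline x(c)\|_p^p=\sum_{l=1}^m\left(\min_{i\in\mathcal S_l}\frac{w_i}{\pi^{(l)}_i}\right)^p\|\pi^{(l)}\|_p^p.$$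
   Context: $P$ sub-stochastic: nonnegative with $P\mathbbm{1}\le\mathbbm{1}$. $(S_0^w(x))_i=\min\{\max\{x_i,0\},w_i\}$; $'$ is transpose; $P_{\mathcal A\mathcal B}$ is the restriction of $P$ to rows $\mathcal A$ and columns $\mathcal B$. The graph $\mathcal G_P$ has nodes $\{1,\dots,n\}$ and a link $(i,j)$ iff $P_{ij}>0$. A trapping set is a nonempty $\mathcal S$ with $P_{ij}=0$ for $i\in\mathcal S$, $j\notin\mathcal S$; irreducible if it strictly contains no other trapping set; the transient part is the set of nodes in no irreducible trapping set. The statement presupposes (as the paper does) that each block $P_{\mathcal S_l\mathcal S_l}$ has an invariant probability vector $\pi^{(l)}$. *)

From HB Require Import structures.
From mathcomp Require Import all_boot all_order all_algebra.
From mathcomp Require Import all_classical all_reals exp.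
Set Implicit Arguments. Unset Strict Implicit. Unset Printing Implicit Defensive.
Import Order.TTheory GRing.Theory Num.Theory.
Local Open Scope ring_scope.

Definition substochastic (R : realType) n (P : 'M[R]_n) : Prop :=
  (forall i j, 0 <= P i j) /\ (forall i, \sum_j P i j <= 1).

Definition S0 (R : realType) n (w x : 'cV[R]_n) : 'cV[R]_n :=
  \col_i Num.min (Num.max (x i 0) 0) (w i 0).

Definition vle (R : realType) n (x y : 'cV[R]_n) : Prop := forall i, x i 0 <= y i 0.

Definition is_sol (R : realType) n (P : 'M[R]_n) (w c x : 'cV[R]_n) : Prop :=
  x = S0 w (P^T *m x + c).

Definition is_min_sol (R : realType) n (P : 'M[R]_n) (w c x : 'cV[R]_n) : Prop :=
  is_sol P w c x /\ forall y, is_sol P w c y -> vle x y.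

Definition is_max_sol (R : realType) n (P : 'M[R]_n) (w c x : 'cV[R]_n) : Prop :=
  is_sol P w c x /\ forall y, is_sol P w c y -> vle y x.

Definition link (R : realType) n (P : 'M[R]_n) (i j : 'I_n) : bool := 0 < P i j.

Definition trapping (R : realType) n (P : 'M[R]_n) (S : {set 'I_n}) : Prop :=
  S != finset.set0 /\ forall i j, i \in S -> j \notin S -> ~~ link P i j.

Definition irr_trapping (R : realType) n (P : 'M[R]_n) (S : {set 'I_n}) : Prop :=
  trapping P S /\ forall S', trapping P S' -> S' \subset S -> S' = S.

Definition transient (R : realType) n (P : 'M[R]_n) (i : 'I_n) : Prop :=
  forall S, irr_trapping P S -> i \notin S.

(* pi is an invariant probability vector of the block P_{SS} (entries outside S unused) *)
Definition invariant_prob (R : realType) n (P : 'M[R]_n) (S : {set 'I_n})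
    (pi : 'I_n -> R) : Prop :=
  (forall i, i \in S -> 0 <= pi i) /\ \sum_(i in S) pi i = 1 /\
  (forall j, j \in S -> \sum_(i in S) P i j * pi i = pi j).

(* minimum of f over a (nonempty) set S; 0 on the empty set (never used) *)
Definition setmin (R : realType) n (S : {set 'I_n}) (f : 'I_n -> R) : R :=
  match [pick i in S] with
  | Some i0 => \big[Num.min/f i0]_(i in S) f i
  | None => 0
  end.

Definition pnormp (R : realType) n (p : R) (x : 'cV[R]_n) : R :=
  \sum_i `|x i 0| `^ p.

From HB Require Import structures.
From mathcomp Require Import all_boot all_order all_algebra.
From mathcomp Require Import all_classical all_reals exp.
From mathcomp Require Import lra.
From Stdlib Require Import Classical.
Set Implicit Arguments. Unset Strict Implicit. Unset Printing Implicit Defensive.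
Import Order.TTheory GRing.Theory Num.Theory.
Local Open Scope ring_scope.

(* The gap d = xhi c - xlo c between the extreme solutions is nonnegative, and since
   the saturation S_0^w is monotone and 1-Lipschitz it satisfies d <= P'd; summing over
   all nodes with row sums at most 1 turns this into d = P'd.  A nonnegative
   P'-invariant vector vanishes on the transient part (its support there would contain
   a trapping set) and on each irreducible trapping set S is a multiple alpha_S of
   pi^(S) (the difference with the largest multiple below it is again invariant and
   vanishes somewhere, hence everywhere on S).  From d <= w we get
   alpha_S <= min_{i in S} w_i / pi^(S)_i, and equality is reached by an input c that
   pins the transient nodes to 0. *)

Section TrappingSets.
Variables (R : realType) (n : nat) (P : 'M[R]_n).

Lemma trapping_link S i j : trapping P S -> i \in S -> link P i j -> j \in S.
Proof.
move=> [_ noexit] iS lij; apply/negPn/negP => jS.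
by move: (noexit i j iS jS); rewrite lij.
Qed.

Lemma irr_trapping_nonempty S : irr_trapping P S -> exists i, i \in S.
Proof. by move=> [[/set0Pn [i iS] _] _]; exists i. Qed.

Lemma irr_trapping_eq S S' i : irr_trapping P S -> irr_trapping P S' ->
  i \in S -> i \in S' -> S = S'.
Proof.
move=> [[_ tS] minS] [[_ tS'] minS'] iS iS'.
have tSS' : trapping P (S :&: S').
  split; first by apply/set0Pn; exists i; rewrite inE iS iS'.
  move=> a b; rewrite !inE => /andP[aS aS']; rewrite negb_and => /orP[bS|bS'].
  - exact: tS.
  - exact: tS'.
by rewrite -(minS _ tSS' (subsetIl _ _)) (minS' _ tSS' (subsetIr _ _)).
Qed.

Lemma trapping_sub_irr Z : trapping P Z -> exists2 S, irr_trapping P S & S \subset Z.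
Proof.
elim: {Z}#|Z| {-2}Z (leqnn #|Z|) => [|k IH] Z.
  by rewrite leqn0 cards_eq0 => /eqP -> [/eqP].
move=> cardZ tZ; case: (classic (irr_trapping P Z)) => [irrZ|notirrZ].
  by exists Z.
have [Z' tZ' ltZ'Z] : exists2 Z', trapping P Z' & Z' \proper Z.
  apply: NNPP => noZ'; apply: notirrZ; split => // Z' tZ' sZ'Z.
  apply/eqP; apply: NNPP => /negP neZ'; apply: noZ'; exists Z' => //.
  by rewrite finset.properEneq neZ'.
have ltZ' := fintype.proper_card ltZ'Z.
have [S irrS sSZ'] := IH Z' (ltnSE (leq_trans ltZ' cardZ)) tZ'.
by exists S => //; apply: fintype.subset_trans sSZ' (fintype.proper_sub ltZ'Z).
Qed.

Lemma irr_trapping_gt0 S (v : 'I_n -> R) : irr_trapping P S ->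
  (forall i j, i \in S -> j \in S -> link P i j -> 0 < v i -> 0 < v j) ->
  forall k i, k \in S -> i \in S -> 0 < v k -> 0 < v i.
Proof.
move=> [[neS tS] minS] prop k i kS iS vk.
have tpos : trapping P [set j in S | 0 < v j].
  split; first by apply/set0Pn; exists k; rewrite inE kS vk.
  move=> a b; rewrite !inE => /andP[aS va] hb; apply/negP => lab.
  have bS : b \in S := trapping_link (conj neS tS) aS lab.
  by rewrite bS (prop a b aS bS lab va) in hb.
have sub : [set j in S | 0 < v j] \subset S.
  by apply/fintype.subsetP => j; rewrite inE => /andP[].
have := minS _ tpos sub => /setP/(_ i).
by rewrite !inE iS => /andP[].
Qed.

Lemma not_transientP i : ~ transient P i -> exists2 S, irr_trapping P S & i \in S.
Proof.
move=> ntr; apply: NNPP => noS; apply: ntr => S irrS; apply/negP => iS.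
by apply: noS; exists S.
Qed.

Lemma trapping_not_transient Z : trapping P Z -> exists2 i, i \in Z & ~ transient P i.
Proof.
move=> /trapping_sub_irr [S irrS sSZ]; have [i iS] := irr_trapping_nonempty irrS.
by exists i; [exact: (fintype.subsetP sSZ) | move=> /(_ S irrS); rewrite iS].
Qed.

Lemma no_link_to_transient i j : ~ transient P i -> transient P j -> ~~ link P i j.
Proof.
move=> /not_transientP [S irrS iS] trj; apply/negP => lij.
by move: (trj S irrS); rewrite (trapping_link irrS.1 iS lij).
Qed.

Lemma irr_trapping_inflow S i j : irr_trapping P S -> j \in S -> i \notin S ->
  link P i j -> transient P i.
Proof.
move=> irrS jS iS lij; apply: NNPP => /not_transientP [S' irrS' iS'].
have jS' := trapping_link irrS'.1 iS' lij.
by move: iS; rewrite (irr_trapping_eq irrS irrS' jS jS') iS'.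
Qed.

Lemma big_irr_mem_transient (F : {set 'I_n} -> R) j : transient P j ->
  \sum_(S | `[< irr_trapping P S >] && (j \in S)) F S = 0.
Proof.
move=> trj; rewrite big_pred0 // => S; apply/negbTE/negP => /andP[/asboolP irrS jS].
by move: (trj S irrS); rewrite jS.
Qed.

Lemma big_irr_mem (F : {set 'I_n} -> R) j S0 : irr_trapping P S0 -> j \in S0 ->
  \sum_(S | `[< irr_trapping P S >] && (j \in S)) F S = F S0.
Proof.
move=> irrS0 jS0; rewrite (big_pred1 S0) // => S /=.
apply/andP/eqP => [[/asboolP irrS jS]|->]; first exact: irr_trapping_eq irrS irrS0 jS jS0.
by split => //; apply/asboolP.
Qed.

Lemma sum_irr_partition (g : 'I_n -> R) : (forall i, transient P i -> g i = 0) ->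
  \sum_i g i = \sum_(S | `[< irr_trapping P S >]) \sum_(i in S) g i.
Proof.
move=> g0; rewrite (exchange_big_dep xpredT) //=; apply: eq_bigr => i _.
case: (classic (transient P i)) => [tri|/not_transientP [S irrS iS]].
  by rewrite (big_irr_mem_transient (fun=> g i)) // g0.
by rewrite (big_irr_mem (fun=> g i) irrS iS).
Qed.

End TrappingSets.

Section SetMin.
Variables (R : realType) (n : nat) (S : {set 'I_n}) (f : 'I_n -> R).

Lemma setmin_le i : i \in S -> setmin S f <= f i.
Proof.
move=> iS; rewrite /setmin; case: pickP => [i0 _|noS]; first exact: bigmin_le_cond.
by move: (noS i); rewrite iS.
Qed.

Lemma le_setmin a : (exists i, i \in S) -> (forall i, i \in S -> a <= f i) ->
  a <= setmin S f.
Proof.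
move=> [j jS] lef; rewrite /setmin; case: pickP => [i0 i0S|noS].
  by apply: le_bigmin => //; exact: lef.
by move: (noS j); rewrite jS.
Qed.

Lemma setmin_attained : (exists i, i \in S) -> exists2 k, k \in S & setmin S f = f k.
Proof.
move=> [j jS]; rewrite /setmin; case: pickP => [i0 i0S|noS]; last by move: (noS j); rewrite jS.
elim/big_rec: _ => [|i x iS [k kS ->]]; first by exists i0.
by have [fik|fki] := leP (f i) (f k); [exists i | exists k].
Qed.

End SetMin.

Lemma clamp_bounds (R : realType) (a w : R) : 0 <= w ->
  0 <= Num.min (Num.max a 0) w <= w.
Proof. by move=> w0; rewrite le_min w0 le_max lexx orbT ge_min lexx orbT. Qed.

Lemma clamp_sub_le (R : realType) (a b w : R) : 0 <= w -> b <= a ->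
  Num.min (Num.max a 0) w - Num.min (Num.max b 0) w <= a - b.
Proof.
move=> w0 ba.
have [ha|ha] := leP a 0; have [hb|hb] := leP b 0; rewrite ?(min_l w0);
  try (have [h1|h1] := leP a w); try (have [h2|h2] := leP b w); lra.
Qed.

Section Substochastic.
Variables (R : realType) (n : nat) (P : 'M[R]_n).
Hypothesis HP : substochastic P.

Let P_ge0 i j : 0 <= P i j := HP.1 i j.

Lemma no_link_eq0 i j : ~~ link P i j -> P i j = 0.
Proof. by rewrite /link -leNgt => le0; apply/eqP; rewrite eq_le le0 P_ge0. Qed.

Lemma sum_link_gt0 (A : {pred 'I_n}) (v : 'I_n -> R) a b :
  (forall i, A i -> 0 <= v i) -> A a -> link P a b -> 0 < v a ->
  0 < \sum_(i | A i) P i b * v i.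
Proof.
move=> v0 Aa lab va; rewrite (bigD1 a) //=; apply: ltr_pwDl; first by rewrite mulr_gt0.
by apply: sumr_ge0 => i /andP[Ai _]; rewrite mulr_ge0 ?v0.
Qed.

Lemma subharmonic_harmonic (d : 'I_n -> R) : (forall i, 0 <= d i) ->
  (forall j, d j <= \sum_i P i j * d i) -> forall j, d j = \sum_i P i j * d i.
Proof.
move=> d0 dle j; pose D k := \sum_i P i k * d i - d k.
have D0 k : 0 <= D k by rewrite subr_ge0.
have SD : \sum_k D k <= 0.
  rewrite sumrB exchange_big /= subr_le0; apply: ler_sum => i _.
  by rewrite -mulr_suml mulrC ler_piMr ?HP.2.
have SD0 : \sum_k D k = 0 by apply/le_anti; rewrite SD /=; exact: sumr_ge0.
by have /eqP := psumr_eq0P (fun k _ => D0 k) SD0 (i := j) isT; rewrite subr_eq0 => /eqP.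
Qed.

Lemma sum_inflow_irr (v : 'I_n -> R) S j : (forall i, transient P i -> v i = 0) ->
  irr_trapping P S -> j \in S -> \sum_i P i j * v i = \sum_(i in S) P i j * v i.
Proof.
move=> v0 irrS jS; rewrite (bigID (mem S)) /= [X in _ + X]big1 ?addr0 // => i iS.
have [lij|/no_link_eq0 ->] := boolP (link P i j); last by rewrite mul0r.
by rewrite v0 ?mulr0 //; apply: irr_trapping_inflow irrS jS iS lij.
Qed.

Lemma invariant_prob_gt0 S pi : irr_trapping P S -> invariant_prob P S pi ->
  forall i, i \in S -> 0 < pi i.
Proof.
move=> irrS [pi_ge0 [pi_sum1 pi_inv]].
have [k kS pik] : exists2 k, k \in S & 0 < pi k.
  apply: NNPP => nopos; move: pi_sum1; rewrite big1 => [/eqP|i iS].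
    by rewrite eq_sym oner_eq0.
  apply/eqP; rewrite eq_le pi_ge0 // andbT leNgt; apply/negP => pii.
  by apply: nopos; exists i.
move=> i iS; apply: (irr_trapping_gt0 irrS _ kS iS pik) => a b aS bS lab pia.
by rewrite -(pi_inv b bS); apply: sum_link_gt0 pi_ge0 aS lab pia.
Qed.

Section Harmonic.
Variable d : 'I_n -> R.
Hypothesis d_ge0 : forall i, 0 <= d i.
Hypothesis d_harmonic : forall j, d j = \sum_i P i j * d i.

Let T := [set i | `[< transient P i >]].

Let inT k : reflect (transient P k) (k \in T).
Proof. by rewrite inE; exact: asboolP. Qed.

Lemma harmonic_transient_leak i : transient P i ->
  d i * (1 - \sum_(j in T) P i j) = 0.
Proof.
have T_closed k j : k \notin T -> j \in T -> P k j = 0.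
  move=> /negP kT /inT trj; apply: no_link_eq0; apply: (no_link_to_transient _ trj).
  by move=> /inT /kT.
have sumT : \sum_(j in T) d j = \sum_(k in T) d k * \sum_(j in T) P k j.
  transitivity (\sum_(j in T) \sum_(k in T) P k j * d k).
    apply: eq_bigr => j jT; rewrite d_harmonic (bigID (mem T)) /=.
    by rewrite [X in _ + X]big1 ?addr0 // => k kT; rewrite T_closed ?mul0r.
  rewrite exchange_big /=; apply: eq_bigr => k _; rewrite mulr_sumr.
  by apply: eq_bigr => j _; rewrite mulrC.
have leak_ge0 k : k \in T -> 0 <= d k * (1 - \sum_(j in T) P k j).
  move=> _; rewrite mulr_ge0 // subr_ge0; apply: le_trans (HP.2 k).
  by rewrite [X in _ <= X](bigID (mem T)) /= lerDl sumr_ge0.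
move=> /inT iT.
apply: (psumr_eq0P leak_ge0 _ iT).
by under eq_bigr do rewrite mulrBr mulr1; rewrite sumrB sumT subrr.
Qed.

Lemma harmonic_transient_eq0 i : transient P i -> d i = 0.
Proof.
move=> tri; apply: NNPP => /eqP dne0.
have tpos : trapping P [set k in T | 0 < d k].
  split.
    apply/set0Pn; exists i; rewrite inE lt_neqAle eq_sym dne0 d_ge0 !andbT.
    exact/inT.
  move=> a b; rewrite inE => /andP[aT da]; rewrite inE negb_and => hb.
  apply/negP => lab; case/orP: hb => [bnT|/negP[]]; last first.
    by rewrite d_harmonic; exact: (sum_link_gt0 (A := xpredT) (fun k _ => d_ge0 k) isT lab da).
  have /eqP := harmonic_transient_leak (elimT (inT a) aT).
  rewrite mulf_eq0 gt_eqF //= subr_eq0.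
  move=> /eqP rowT1; have := HP.2 a; rewrite (bigID (mem T)) /= -rowT1.
  have : P a b <= \sum_(j | j \notin T) P a j by rewrite (bigD1 b) //= lerDl sumr_ge0.
  by move: lab; rewrite /link; lra.
have [k kZ ntrk] := trapping_not_transient tpos.
by move: kZ; rewrite inE => /andP[/inT /ntrk].
Qed.

Lemma harmonic_irr_proportional S (pi : 'I_n -> R) :
  irr_trapping P S -> invariant_prob P S pi ->
  forall i, i \in S -> d i = setmin S (fun k => d k / pi k) * pi i.
Proof.
move=> irrS inv; have pi_gt0 := invariant_prob_gt0 irrS inv.
have [_ [_ pi_inv]] := inv.
set a := setmin S _.
have [k kS ak] := setmin_attained (fun k => d k / pi k) (irr_trapping_nonempty irrS).
pose e i := d i - a * pi i.
have e_ge0 i : i \in S -> 0 <= e i.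
  by move=> iS; rewrite subr_ge0 -ler_pdivlMr ?pi_gt0 // setmin_le.
have e_harmonic j : j \in S -> e j = \sum_(i in S) P i j * e i.
  move=> jS; rewrite /e d_harmonic (sum_inflow_irr harmonic_transient_eq0 irrS jS).
  rewrite -(pi_inv j jS) mulr_sumr -sumrB.
  by apply: eq_bigr => i _; rewrite mulrBr mulrCA.
have ek : e k = 0 by rewrite /e /a ak divfK ?subrr // gt_eqF ?pi_gt0.
move=> i iS; apply/eqP; rewrite -subr_eq0 -/(e i) eq_le e_ge0 // andbT leNgt.
apply/negP => ei; suff : 0 < e k by rewrite ek ltxx.
apply: (irr_trapping_gt0 irrS _ iS kS ei) => b j bS jS lbj eb.
by rewrite e_harmonic //; apply: sum_link_gt0 e_ge0 bS lbj eb.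
Qed.

End Harmonic.

End Substochastic.

Section Solutions.
Variables (R : realType) (n : nat) (P : 'M[R]_n) (w c : 'cV[R]_n).

Lemma is_solP x : is_sol P w c x <->
  forall j, x j 0 = Num.min (Num.max (\sum_i P i j * x i 0 + c j 0) 0) (w j 0).
Proof.
have S0E j : S0 w (P^T *m x + c) j 0 =
    Num.min (Num.max (\sum_i P i j * x i 0 + c j 0) 0) (w j 0).
  by rewrite !mxE; congr (Num.min (Num.max (_ + _) _) _); apply: eq_bigr => i _; rewrite mxE.
split => [xsol j|xE]; first by rewrite {1}xsol S0E.
by apply/matrixP => j k; rewrite (ord1 k) S0E xE.
Qed.

Hypothesis w_ge0 : forall i, 0 <= w i 0.

Lemma sol_bounds x : is_sol P w c x -> forall i, 0 <= x i 0 <= w i 0.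
Proof. by move=> /is_solP xE i; rewrite xE clamp_bounds. Qed.

Lemma sol_gap_subharmonic x y : (forall i j, 0 <= P i j) ->
  is_sol P w c x -> is_sol P w c y -> vle y x ->
  forall j, x j 0 - y j 0 <= \sum_i P i j * (x i 0 - y i 0).
Proof.
move=> P_ge0 /is_solP xE /is_solP yE yx j.
have uv : (\sum_i P i j * x i 0 + c j 0) - (\sum_i P i j * y i 0 + c j 0) =
    \sum_i P i j * (x i 0 - y i 0).
  by rewrite opprD addrACA subrr addr0 -sumrB; apply: eq_bigr => i _; rewrite mulrBr.
rewrite (xE j) (yE j) -uv; apply: clamp_sub_le => //.
rewrite -subr_ge0 uv; apply: sumr_ge0 => i _; rewrite mulr_ge0 // subr_ge0.
exact: yx.
Qed.

End Solutions.

Section SolutionGap.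
Variables (R : realType) (n : nat) (P : 'M[R]_n) (w : 'cV[R]_n)
  (xlo xhi : 'cV[R]_n -> 'cV[R]_n) (pi : {set 'I_n} -> 'I_n -> R).
Hypothesis HP : substochastic P.
Hypothesis w_ge0 : forall i, 0 <= w i 0.
Hypothesis xlo_min : forall c, is_min_sol P w c (xlo c).
Hypothesis xhi_max : forall c, is_max_sol P w c (xhi c).
Hypothesis pi_invariant : forall S, irr_trapping P S -> invariant_prob P S (pi S).

Let pi_gt0 S i : irr_trapping P S -> i \in S -> 0 < pi S i.
Proof. by move=> irrS; apply: (invariant_prob_gt0 HP irrS (pi_invariant irrS)). Qed.

Definition gap c i := xhi c i 0 - xlo c i 0.

Definition gap_scale c S := setmin S (fun i => gap c i / pi S i).

Definition cap S := setmin S (fun i => w i 0 / pi S i).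

Lemma cap_ge0 S : irr_trapping P S -> 0 <= cap S.
Proof.
move=> irrS; apply: le_setmin (irr_trapping_nonempty irrS) _ => i iS.
by rewrite divr_ge0 ?w_ge0 // ltW ?pi_gt0.
Qed.

Lemma gap_ge0 c i : 0 <= gap c i.
Proof. by rewrite subr_ge0; apply: (xlo_min c).2; exact: (xhi_max c).1. Qed.

Lemma gap_le_w c i : gap c i <= w i 0.
Proof.
have /andP[_ xhi_le] := sol_bounds w_ge0 (xhi_max c).1 i.
have /andP[xlo_ge0 _] := sol_bounds w_ge0 (xlo_min c).1 i.
by rewrite /gap lerBlDr ler_wpDr.
Qed.

Lemma gap_harmonic c j : gap c j = \sum_i P i j * gap c i.
Proof.
apply: (subharmonic_harmonic HP (gap_ge0 c)) => k.
apply: (sol_gap_subharmonic w_ge0 HP.1 (xhi_max c).1 (xlo_min c).1).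
exact: (xlo_min c).2 _ (xhi_max c).1.
Qed.

Lemma gap_transient c i : transient P i -> gap c i = 0.
Proof. exact: (harmonic_transient_eq0 HP (gap_ge0 c) (gap_harmonic c)). Qed.

Lemma gap_irr c S i : irr_trapping P S -> i \in S -> gap c i = gap_scale c S * pi S i.
Proof.
move=> irrS.
exact: (harmonic_irr_proportional HP (gap_ge0 c) (gap_harmonic c) irrS (pi_invariant irrS)).
Qed.

Lemma gap_scale_ge0 c S : irr_trapping P S -> 0 <= gap_scale c S.
Proof.
move=> irrS; apply: le_setmin (irr_trapping_nonempty irrS) _ => i iS.
by rewrite divr_ge0 ?gap_ge0 // ltW ?pi_gt0.
Qed.

Lemma gap_scale_le_cap c S : irr_trapping P S -> gap_scale c S <= cap S.
Proof.
move=> irrS; apply: le_setmin (irr_trapping_nonempty irrS) _ => i iS.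
by rewrite ler_pdivlMr ?pi_gt0 // -gap_irr // gap_le_w.
Qed.

Lemma pnormp_gap c p : 0 < p -> pnormp p (xhi c - xlo c) =
  \sum_(S | `[< irr_trapping P S >]) gap_scale c S `^ p * \sum_(i in S) `|pi S i| `^ p.
Proof.
move=> p_gt0; rewrite /pnormp; under eq_bigr do rewrite !mxE -/(gap c _).
rewrite (sum_irr_partition (P := P)) => [|i tri]; last first.
  by rewrite gap_transient // normr0 powR0 // gt_eqF.
apply: eq_bigr => S /asboolP irrS; rewrite mulr_sumr; apply: eq_bigr => i iS.
have scale_ge0 := gap_scale_ge0 c irrS.
by rewrite (gap_irr c irrS iS) normrM (ger0_norm scale_ge0) powRM.
Qed.

Lemma pnormp_gap_le c p : 0 < p -> pnormp p (xhi c - xlo c) <=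
  \sum_(S | `[< irr_trapping P S >]) cap S `^ p * \sum_(i in S) `|pi S i| `^ p.
Proof.
move=> p_gt0; rewrite pnormp_gap //; apply: ler_sum => S /asboolP irrS.
apply: ler_wpM2r; first by apply: sumr_ge0 => i _; exact: powR_ge0.
apply: ge0_ler_powR; first exact: ltW.
all: by rewrite ?nnegrE ?cap_ge0 ?gap_scale_ge0 ?gap_scale_le_cap.
Qed.

(* The input -(P'w)_j forces every solution to vanish at a transient node j, while
   the irreducible classes receive no input; so both 0 and [profile], the largest
   multiple of [pi S] below [w] on each class, are solutions. *)
Definition c_extremal : 'cV[R]_n :=
  \col_j (if `[< transient P j >] then - \sum_i P i j * w i 0 else 0).

Definition profile j := \sum_(S | `[< irr_trapping P S >] && (j \in S)) cap S * pi S j.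

Lemma profile_transient j : transient P j -> profile j = 0.
Proof. exact: big_irr_mem_transient. Qed.

Lemma profile_irr S j : irr_trapping P S -> j \in S -> profile j = cap S * pi S j.
Proof. exact: big_irr_mem. Qed.

Lemma profile_bounds j : 0 <= profile j <= w j 0.
Proof.
have [trj|/not_transientP [S irrS jS]] := classic (transient P j).
  by rewrite profile_transient // lexx w_ge0.
rewrite (profile_irr irrS jS) mulr_ge0 ?cap_ge0 ?(ltW (pi_gt0 irrS jS)) //=.
by rewrite -ler_pdivlMr ?pi_gt0 //; apply: setmin_le.
Qed.

Lemma zero_sol_extremal : is_sol P w c_extremal 0.
Proof.
apply/is_solP => j; rewrite big1 => [|i _]; last by rewrite mxE mulr0.
have c_le0 : c_extremal j 0 <= 0.
  rewrite mxE; case: asboolP => _ //; rewrite oppr_le0.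
  by apply: sumr_ge0 => i _; rewrite mulr_ge0 ?HP.1.
by rewrite mxE add0r (max_r c_le0) (min_l (w_ge0 j)).
Qed.

Lemma profile_sol_extremal : is_sol P w c_extremal (\col_j profile j).
Proof.
apply/is_solP => j; rewrite !mxE; under eq_bigr do rewrite mxE.
have [trj|ntrj] := classic (transient P j).
  rewrite (asboolT trj) profile_transient // max_r ?min_l ?w_ge0 // subr_le0.
  by apply: ler_sum => i _; rewrite ler_wpM2l ?HP.1 //; case/andP: (profile_bounds i).
have [S irrS jS] := not_transientP ntrj.
have [_ [_ piS_inv]] := pi_invariant irrS.
rewrite (asboolF ntrj) addr0 (sum_inflow_irr HP profile_transient irrS jS).
have -> : \sum_(i in S) P i j * profile i = profile j.
  rewrite (profile_irr irrS jS) -(piS_inv j jS) mulr_sumr; apply: eq_bigr => i iS.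
  by rewrite (profile_irr irrS iS) mulrCA.
have /andP[prof_ge0 prof_le] := profile_bounds j.
by rewrite (max_l prof_ge0) (min_l prof_le).
Qed.

Lemma xlo_extremal i : xlo c_extremal i 0 = 0.
Proof.
have /andP[xlo_ge0 _] := sol_bounds w_ge0 (xlo_min c_extremal).1 i.
have := (xlo_min c_extremal).2 _ zero_sol_extremal i; rewrite mxE => xlo_le0.
by apply/le_anti; rewrite xlo_le0 xlo_ge0.
Qed.

Lemma gap_scale_extremal S : irr_trapping P S -> gap_scale c_extremal S = cap S.
Proof.
move=> irrS; apply/le_anti; rewrite gap_scale_le_cap //=.
apply: le_setmin (irr_trapping_nonempty irrS) _ => i iS.
rewrite ler_pdivlMr ?pi_gt0 // -(profile_irr irrS iS) /gap xlo_extremal subr0.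
by have := (xhi_max c_extremal).2 _ profile_sol_extremal i; rewrite mxE.
Qed.

End SolutionGap.

Theorem corollary2 (R : realType) (n : nat) (P : 'M[R]_n) (w : 'cV[R]_n)
    (xlo xhi : 'cV[R]_n -> 'cV[R]_n) (pi : {set 'I_n} -> 'I_n -> R) (p : R) :
  substochastic P ->
  (forall i, 0 <= w i 0) ->
  (forall c, is_min_sol P w c (xlo c)) ->
  (forall c, is_max_sol P w c (xhi c)) ->
  (forall S, irr_trapping P S -> invariant_prob P S (pi S)) ->
  1 <= p ->
  let V := \sum_(S : {set 'I_n} | `[< irr_trapping P S >])
             (setmin S (fun i => w i 0 / pi S i)) `^ p *
             \sum_(i in S) `|pi S i| `^ p in
  (forall c, pnormp p (xhi c - xlo c) <= V) /\
  (exists c, pnormp p (xhi c - xlo c) = V).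
Proof.
move=> HP w_ge0 xlo_min xhi_max pi_inv p_ge1 V.
have p_gt0 : 0 < p := lt_le_trans ltr01 p_ge1.
split => [c|]; first exact: (pnormp_gap_le HP w_ge0 xlo_min xhi_max pi_inv c p_gt0).
exists (c_extremal P w); rewrite (pnormp_gap HP w_ge0 xlo_min xhi_max pi_inv _ p_gt0).
apply: eq_bigr => S /asboolP irrS.
by rewrite (gap_scale_extremal HP w_ge0 xlo_min xhi_max pi_inv irrS).
Qed.
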